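(* Let $R>0$ and let $B_{\mathcal D}=\{\beta_1,\dots,\beta_n\}$ with $0\le\beta_1\le\dots\le\beta_n$ and $\sum_i\beta_i=\beta$ be a bid set of $\mathcal D$. Fix $\ell\in\{1,\dots,n\}$ and suppose some $\ell$-set $I$ satisfies all three of: - (P1) $|I|\le n$; - (P2) $\Sigma(I)\ge \frac{R_\ell\,\ell(\ell+1)}{2}$; - (P3) $\sigma(I,\ell)+(n-|I|)\beta_{n-\ell}<R\beta$. Then $W(\pi_{\rm unif},B_{\mathcal D})\ge f(\ell)$.
   Context: Position-randomized auction with two bidders $\mathcal A$ and $\mathcal D$ and $n\ge1$ objects. $\mathcal D$ has budget $\beta>0$ and $\mathcal A$ has budget $R\beta$ with $R>0$. A bidding algorithm of a bidder is a pair $(\pi,B)$: $B$ (the bid set) is a multiset of $n$ nonnegative reals whose sum is at most the bidder's budget, and $\pi$ is a randomized algorithm permuting sequences of length $n$. Applying $\pi$ to a listing of $B$ gives the final bid sequence, whose $i$-th entry is the bid on object $i$. The two bidders' permutations are independent. Each object goes to the higher bid; on a tie each bidder wins it with probability $1/2$. $w(\pi_{\mathcal A},\pi_{\mathcal D},B_{\mathcal A},B_{\mathcal D})$ is the expected number of objects won by $\mathcal A$. $W(\pi_{\mathcal D},B_{\mathcal D})$ is its supremum over all bidding algorithms $(\pi_{\mathcal A},B_{\mathcal A})$ of $\mathcal A$. $\pi_{\rm unif}$ applies a uniformly random permutation. For $x,y>0$, $\mathrm{less}(x,y)=y(\lceil x/y\rceil-1)$. For $\ell=1,\dots,n$, let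 $R_\ell=\mathrm{less}(R,\frac2{\ell(\ell+1)})$ and $f(\ell)=n-\ell+\frac{\ell(\ell+1)R_\ell}{2n}$. Set $\beta_0=0$. An $\ell$-set is a finite multiset of elements of $\{0,1,\dots,\ell\}$. For a multiset $I$, $|I|$ is its cardinality and $\Sigma(I)$ the sum of its elements, both counting multiplicity. For an $\ell$-set $I$, $\sigma(I,\ell)=\sum_{i\in I}\beta_{n-\ell+i}$, counting multiplicity. *)

From HB Require Import structures.
From mathcomp Require Import all_boot all_order all_algebra perm.
From mathcomp Require Import boolp classical_sets reals.
Set Implicit Arguments. Unset Strict Implicit. Unset Printing Implicit Defensive.
Import Order.TTheory GRing.Theory Num.Theory.
Local Open Scope ring_scope.

Section Auction.
Variable R : realType.

Definition less (x y : R) : R := y * ((Num.ceil (x / y))%:~R - 1).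

Definition Rl (rho : R) (l : nat) : R := less rho (2 / (l * l.+1)%:R).

Definition fval (rho : R) (n l : nat) : R :=
  n%:R - l%:R + (l * l.+1)%:R * Rl rho l / (2 * n%:R).

(* A bid set (multiset) of n nonneg reals with sum at most the budget,
   given through a listing (an n-tuple). *)
Definition bid_set (n : nat) (budget : R) (B : n.-tuple R) : Prop :=
  (forall i, 0 <= tnth B i) /\ \sum_(i < n) tnth B i <= budget.

(* A randomized permuting algorithm: given the listing of the input,
   it outputs a probability distribution over permutations of positions. *)
Definition randperm (n : nat) := n.-tuple R -> {perm 'I_n} -> R.

Definition is_randperm (n : nat) (pi : randperm n) : Prop :=
  forall t, (forall s, 0 <= pi t s) /\ \sum_(s : {perm 'I_n}) pi t s = 1.

Definition pi_unif (n : nat) : randperm n :=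
  fun _ _ => (#|{: {perm 'I_n}}|%:R)^-1.

Definition final_bid (n : nat) (B : n.-tuple R) (s : {perm 'I_n}) (i : 'I_n) : R :=
  tnth B (s i).

Definition win (x y : R) : R := if y < x then 1 else if x == y then 1/2 else 0.

Definition w (n : nat) (piA piD : randperm n) (BA BD : n.-tuple R) : R :=
  \sum_(sA : {perm 'I_n}) \sum_(sD : {perm 'I_n})
     piA BA sA * piD BD sD *
     \sum_(i < n) win (final_bid BA sA i) (final_bid BD sD i).

Definition W (n : nat) (rho beta : R) (piD : randperm n) (BD : n.-tuple R) : R :=
  sup [set x : R | exists (piA : randperm n) (BA : n.-tuple R),
          is_randperm piA /\ bid_set (rho * beta) BA /\ x = w piA piD BA BD].

(* beta_k for k = 1..n (1-indexed, sorted listing), with beta_0 = 0 *)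
Definition betaD (n : nat) (B : n.-tuple R) (k : nat) : R :=
  if k is k'.+1 then nth 0 B k' else 0.

(* an l-set: finite multiset of elements of {0,...,l} *)
Definition lset (l : nat) (I : seq nat) : bool := all (fun i => i <= l)%N I.

Definition sigmaI (n : nat) (B : n.-tuple R) (I : seq nat) (l : nat) : R :=
  \sum_(i <- I) betaD B (n - l + i)%N.

End Auction.

(* Against a uniformly permuted bid set, a bid of [beta_k + eps] placed on a
   random object beats at least the [k] smallest bids of D, hence wins with
   probability at least [k / n].  A therefore bids [beta_(n-l+i) + eps] for
   each [i] in [I] and [beta_(n-l) + eps] on the remaining [n - |I|] objects:
   (P3) leaves room in the budget for some [eps > 0], and the expected number
   of objects won is at least [(n (n - l) + Sigma(I)) / n], which is at least
   [f(l)] by (P2). *)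
From HB Require Import structures.
From mathcomp Require Import all_boot all_order all_algebra perm.
From mathcomp Require Import boolp classical_sets reals.
From mathcomp Require Import ring lra zify.
Import Order.TTheory GRing.Theory Num.Theory.
Local Open Scope ring_scope.

Lemma sum_perm_at_eq {T : finType} {V : nmodType} (F : T -> V) (i j : T) :
  \sum_(s : {perm T}) F (s i) = \sum_(s : {perm T}) F (s j).
Proof.
rewrite (reindex_inj (mulgI (tperm j i))).
by apply: eq_bigr => s _; rewrite permM tpermR.
Qed.

Lemma sum_perm_at {T : finType} {V : nmodType} (F : T -> V) (i : T) :
  (\sum_(s : {perm T}) F (s i)) *+ #|T| = (\sum_j F j) *+ #|{perm T}|.
Proof.
transitivity (\sum_(j : T) \sum_(s : {perm T}) F (s j)).
  by rewrite -sumr_const; apply: eq_big => // j _; apply: sum_perm_at_eq.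
rewrite exchange_big -sumr_const; apply: eq_big => // s _.
by rewrite [RHS](reindex_inj (@perm_inj _ s)); apply: eq_big.
Qed.

Lemma sum_perm_at_avg {T : finType} {K : numFieldType} (F : T -> K) (i : T) :
  \sum_(s : {perm T}) F (s i) = #|{perm T}|%:R / #|T|%:R * \sum_j F j.
Proof.
have T_neq0 : (#|T|%:R : K) != 0 by rewrite pnatr_eq0 -lt0n; apply/card_gt0P; exists i.
have := congr1 (fun x => x / #|T|%:R) (sum_perm_at F i).
rewrite /= -[X in X / _ = _]mulr_natr mulfK // => ->.
by rewrite -[X in X / _]mulr_natl mulrAC.
Qed.

Definition bid_targets (n l : nat) (I : seq nat) : seq nat :=
  [seq (n - l + i)%N | i <- I] ++ nseq (n - size I)%N (n - l)%N.

Lemma size_bid_targets n l I : (size I <= n)%N -> size (bid_targets n l I) = n.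
Proof. by move=> I_size; rewrite size_cat size_map size_nseq subnKC. Qed.

Lemma bid_targets_le n l I : (l <= n)%N -> lset l I ->
  all (fun k => k <= n)%N (bid_targets n l I).
Proof.
move=> l_le_n I_lset; rewrite all_cat all_nseq leq_subr orbT andbT all_map.
by apply/allP => i /(allP I_lset) /=; lia.
Qed.

Lemma sumn_bid_targets n l I : (size I <= n)%N ->
  sumn (bid_targets n l I) = (n * (n - l) + sumn I)%N.
Proof.
move=> I_size; rewrite sumn_cat sumn_nseq sumnE big_map big_split /= -sumnE.
by rewrite big_const_seq count_predT iter_addn_0 addnAC -mulnDr subnKC // mulnC.
Qed.

Section Auction.
Context {R : realType}.

Lemma win_ge0 (x y : R) : 0 <= win x y.
Proof. by rewrite /win; case: ifP => _; [|case: ifP => _]; lra. Qed.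

Lemma win_le1 (x y : R) : win x y <= 1.
Proof. by rewrite /win; case: ifP => _; [|case: ifP => _]; lra. Qed.

Lemma pi_unif_randperm n : is_randperm (@pi_unif R n).
Proof.
move=> t; rewrite /pi_unif; split=> [s|]; first by rewrite invr_ge0 ler0n.
rewrite sumr_const -[_^-1 *+ _]mulr_natl mulfV // pnatr_eq0 -lt0n.
by apply/card_gt0P; exists 1%g.
Qed.

Lemma w_le n (piA piD : randperm R n) BA BD :
  is_randperm piA -> is_randperm piD -> w piA piD BA BD <= n%:R.
Proof.
move=> piA_distr piD_distr.
have wins_le sA sD :
    \sum_(i < n) win (final_bid BA sA i) (final_bid BD sD i) <= n%:R.
  by rewrite -[n in n%:R]card_ord -sumr_const; apply: ler_sum => *; apply: win_le1.
apply: le_trans (_ : \sum_sA \sum_sD piA BA sA * piD BD sD * n%:R <= _).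
  apply: ler_sum => sA _; apply: ler_sum => sD _; apply: ler_wpM2l (wins_le _ _).
  by apply: mulr_ge0; [case: (piA_distr BA) | case: (piD_distr BD)].
under eq_bigr => sA _ do
  rewrite -big_distrl /= -big_distrr /= (proj2 (piD_distr BD)) mulr1.
by rewrite -big_distrl /= (proj2 (piA_distr BA)) mul1r.
Qed.

Lemma w_le_W n rho beta (piA piD : randperm R n) BA BD :
  is_randperm piA -> is_randperm piD -> bid_set (rho * beta) BA ->
  w piA piD BA BD <= W rho beta piD BD.
Proof.
move=> piA_distr piD_distr BA_bid; apply: ub_le_sup; last by exists piA, BA.
by exists n%:R => _ [piA' [BA' [? [_ ->]]]]; apply: w_le.
Qed.

Lemma w_pi_unif n (BA BD : n.-tuple R) : (0 < n)%N ->
  w (@pi_unif R n) (@pi_unif R n) BA BD =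
  (\sum_(x <- BA) \sum_(j < n) win x (tnth BD j)) / n%:R.
Proof.
move=> n_gt0; set N : R := #|{perm 'I_n}|%:R.
have N_neq0 : N != 0 by rewrite pnatr_eq0 -lt0n; apply/card_gt0P; exists 1%g.
have n_neq0 : (n%:R : R) != 0 by rewrite pnatr_eq0 -lt0n.
have avgD sA : \sum_sD \sum_(i < n) win (final_bid BA sA i) (final_bid BD sD i) =
    N / n%:R * \sum_(x <- BA) \sum_(j < n) win x (tnth BD j).
  rewrite exchange_big big_tuple big_distrr [RHS](reindex_inj (@perm_inj _ sA)).
  apply: eq_bigr => i _.
  by rewrite (sum_perm_at_avg (fun j => win (tnth BA (sA i)) (tnth BD j))) card_ord.
rewrite /w /pi_unif -/N.
under eq_bigr => sA _ do rewrite -big_distrr avgD.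
rewrite -big_distrr /= sumr_const -mulr_natl -/N; field.
by rewrite N_neq0 n_neq0.
Qed.

Lemma avg_win_le_W {n rho beta} {BA : n.-tuple R} (BD : n.-tuple R) : (0 < n)%N ->
  bid_set (rho * beta) BA ->
  (\sum_(x <- BA) \sum_(j < n) win x (tnth BD j)) / n%:R <=
    W rho beta (@pi_unif R n) BD.
Proof.
move=> n_gt0 BA_bid; rewrite -w_pi_unif //.
by apply: w_le_W => //; apply: pi_unif_randperm.
Qed.

Context {n : nat} {BD : n.-tuple R}.
Hypotheses (BD_ge0 : forall i : 'I_n, 0 <= tnth BD i) (BD_sorted : sorted <=%R BD).

Lemma betaD_ge0 k : 0 <= betaD BD k.
Proof.
case: k => [|k] //=; case: (ltnP k n) => [k_lt_n | k_ge_n].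
  by have := BD_ge0 (Ordinal k_lt_n); rewrite (tnth_nth 0).
by rewrite nth_default // size_tuple.
Qed.

Lemma tnth_le_betaD (j : 'I_n) k : (j < k <= n)%N -> tnth BD j <= betaD BD k.
Proof.
case: k => [|k] // /andP[j_le_k k_lt_n]; rewrite (tnth_nth 0) /=.
by apply: (sorted_leq_nth le_trans lexx) => //; rewrite inE size_tuple.
Qed.

Lemma sum_win_betaD_ge k eps : 0 < eps -> (k <= n)%N ->
  k%:R <= \sum_(j < n) win (betaD BD k + eps) (tnth BD j).
Proof.
move=> eps_gt0 k_le_n; rewrite (bigID (fun j : 'I_n => (j < k)%N)) /=.
apply: ler_wpDr; first by apply: sumr_ge0 => j _; apply: win_ge0.
have -> : k%:R = \sum_(j < n | (j < k)%N) (1 : R).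
  by rewrite -(big_ord_widen _ (fun=> 1) k_le_n) sumr_const card_ord.
apply: ler_sum => j j_lt_k; rewrite /win ifT //.
apply: le_lt_trans (tnth_le_betaD j k _) _; first by rewrite j_lt_k.
by rewrite ltrDl.
Qed.

Lemma sum_betaD_bid_targets l I :
  \sum_(k <- bid_targets n l I) betaD BD k =
    sigmaI BD I l + (n - size I)%:R * betaD BD (n - l).
Proof. by rewrite big_cat big_map big_nseq iter_addr addr0 mulr_natl. Qed.

Definition shifted_bids (ks : n.-tuple nat) (eps : R) : n.-tuple R :=
  map_tuple (fun k => betaD BD k + eps) ks.

Lemma shifted_bids_bid_set (ks : n.-tuple nat) eps budget : 0 <= eps ->
  \sum_(k <- ks) betaD BD k + n%:R * eps <= budget ->
  bid_set budget (shifted_bids ks eps).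
Proof.
move=> eps_ge0 sum_le; split=> [i|].
  by rewrite tnth_map addr_ge0 ?betaD_ge0.
rewrite -(big_tuple _ _ _ xpredT id) big_map big_split /=.
rewrite big_const_seq count_predT size_tuple.
by rewrite iter_addr addr0 -mulr_natl.
Qed.

Lemma sum_win_shifted_bids_ge (ks : n.-tuple nat) eps : 0 < eps ->
  all (fun k => k <= n)%N ks ->
  (sumn ks)%:R <= \sum_(x <- shifted_bids ks eps) \sum_(j < n) win x (tnth BD j).
Proof.
move=> eps_gt0 /allP ks_le_n; rewrite big_map sumnE natr_sum !big_seq.
by apply: ler_sum => k k_ks; apply: sum_win_betaD_ge => //; apply: ks_le_n.
Qed.

End Auction.

Theorem lemma2 (R : realType) (n : nat) (rho beta : R) (BD : n.-tuple R)
    (l : nat) (I : seq nat) :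
  (1 <= n)%N -> 0 < beta -> 0 < rho ->
  (forall i : 'I_n, 0 <= tnth BD i) ->
  sorted <=%R BD ->
  \sum_(i < n) tnth BD i = beta ->
  (1 <= l <= n)%N ->
  lset l I ->
  (size I <= n)%N ->
  (sumn I)%:R >= Rl rho l * (l * l.+1)%:R / 2 ->
  sigmaI BD I l + (n - size I)%:R * betaD BD (n - l) < rho * beta ->
  W rho beta (@pi_unif R n) BD >= fval rho n l.
Proof.
move=> n_gt0 _ _ BD_ge0 BD_sorted _ /andP[_ l_le_n] I_lset I_size sumnI_ge slack.
have ks_size : size (bid_targets n l I) == n by rewrite size_bid_targets.
set ks : n.-tuple nat := Tuple ks_size.
rewrite -sum_betaD_bid_targets in slack.
set S := \sum_(k <- _) _ in slack.
have nR_gt0 : (0 : R) < n%:R by rewrite ltr0n.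
pose eps := (rho * beta - S) / n%:R.
have eps_gt0 : 0 < eps by rewrite divr_gt0 // subr_gt0.
have BA_bid : bid_set (rho * beta) (shifted_bids (BD := BD) ks eps).
  apply: shifted_bids_bid_set BD_ge0 _ _ _ (ltW eps_gt0) _.
  by rewrite /eps mulrC divfK ?lt0r_neq0 // addrC subrK.
apply: le_trans (avg_win_le_W BD n_gt0 BA_bid); rewrite ler_pdivlMr //.
apply: le_trans (sum_win_shifted_bids_ge BD_sorted ks eps eps_gt0 _); last first.
  exact: bid_targets_le.
rewrite sumn_bid_targets // natrD natrM natrB //.
have -> : fval rho n l * n%:R = n%:R * (n%:R - l%:R) + Rl rho l * (l * l.+1)%:R / 2.
  by rewrite /fval; field; rewrite lt0r_neq0.
by rewrite lerD2l.
Qed.
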